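(* For two finite subsets $E,F\subseteq\mathbb{N}$ with $\min\{|E|,|F|\}\ge2$, we have $\mathcal{F}_E\subseteq\mathcal{F}_F$ if and only if $A_F\subseteq A_E$, $\Pi_F\setminus\{2\}\subseteq\Pi_E$, and $\alpha_E(p)=\alpha_F(p)$ for all $p\in A_F\setminus\Pi_E$.
   Context: $\mathbb{N}=\{1,2,\dots\}$, $\mathbb{N}_0=\{0\}\cup\mathbb{N}$, $\Pi$ the set of primes, $\Pi_z$ the set of prime divisors of $z$; $\{0,k\}+p\mathbb{Z}=p\mathbb{Z}\cup(k+p\mathbb{Z})$. The Kirch topology $\tau_K$ on $\mathbb{N}$ is generated by the base of all $a+b\mathbb{N}_0=\{a+bn:n\in\mathbb{N}_0\}$ with $a,b\in\mathbb{N}$ coprime and $b$ square-free. Closures $\overline{U}$ are in $\tau_K$; $\tau_x=\{U\in\tau_K:x\in U\}$. For finite $E\subseteq\mathbb{N}$, $\mathcal{F}_E=\{B\subseteq\mathbb{N}:\exists (U_x)_{x\in E}\in\prod_{x\in E}\tau_x\ (\bigcap_{x\in E}\overline{U_x}\subseteq B)\}$. For nonempty finite $E$: $\Pi_E=\bigcap_{z\in E}\Pi_z$; $A_E=\{p\in\Pi:\exists k\in\mathbb{N}\ (E\subseteq\{0,k\}+p\mathbb{Z})\}$; $\alpha_E:A_E\to\mathbb{N}_0$ is the unique function with $0\le\alpha_E(p)<p$ and $E\subseteq\{0,\alpha_E(p)\}+p\mathbb{Z}$ for all $p\in A_E$, $\alpha_E(2)=1$, and $\alpha_E(p)=0$ for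 $p\in\Pi_E\setminus\{2\}$. *)

(* Subsets of N = {1,2,...} are predicates on nat
   (nat -> Prop); finite subsets E of N are duplicate-free sequences of
   positive naturals. *)
From mathcomp Require Import all_boot.
Set Implicit Arguments. Unset Strict Implicit. Unset Printing Implicit Defensive.

Definition basic (a b : nat) : Prop :=
  [/\ 0 < a, 0 < b, coprime a b & forall p, prime p -> ~~ (p * p %| b)].

Definition progr (a b : nat) (y : nat) : Prop := exists n, y = a + b * n.

(* open sets of the Kirch topology: unions of basic sets *)
Definition kopen (U : nat -> Prop) : Prop :=
  forall x, U x -> exists a b, basic a b /\ progr a b x /\
                     (forall y, progr a b y -> U y).

Definition kclosure (U : nat -> Prop) (x : nat) : Prop :=
  0 < x /\ forall V, kopen V -> V x -> exists y, V y /\ U y.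

Definition inF (E : seq nat) (B : nat -> Prop) : Prop :=
  exists U : nat -> (nat -> Prop),
    (forall x, x \in E -> kopen (U x) /\ U x x) /\
    (forall y, (forall x, x \in E -> kclosure (U x) y) -> B y).

Definition inPi (E : seq nat) (p : nat) : Prop :=
  prime p /\ forall z, z \in E -> p %| z.

Definition inA (E : seq nat) (p : nat) : Prop :=
  prime p /\ exists k, 0 < k /\
    forall z, z \in E -> z = 0 %[mod p] \/ z = k %[mod p].

Definition is_alpha (E : seq nat) (alpha : nat -> nat) : Prop :=
  forall p, inA E p ->
    [/\ alpha p < p,
        (forall z, z \in E -> z = 0 %[mod p] \/ z = alpha p %[mod p]),
        (p = 2 -> alpha p = 1) &
        (inPi E p -> p <> 2 -> alpha p = 0)].

From mathcomp Require Import all_boot zify.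
Set Implicit Arguments. Unset Strict Implicit. Unset Printing Implicit Defensive.

(* The closure of a basic set a + bN_0 consists of the y > 0 with y = a (mod q)
   for every prime q | b not dividing y; this is a Chinese remainder argument,
   which needs b squarefree.  Hence F_E is contained in F_F iff, for every
   prime p, each residue r <> 0 (mod p) that agrees modulo p with all elements
   of F prime to p also agrees with all elements of E prime to p.  One
   direction tests the inclusion on the set of y > 0 agreeing with E; the
   other gives each z in F the neighbourhood z + cN_0, where c is the product
   of the primes of a common modulus N of the basic neighbourhoods of E that
   do not divide z.  Read prime by prime, the residue condition says exactly
   A_F <= A_E, Pi_F \ {2} <= Pi_E and alpha_E = alpha_F on A_F \ Pi_E; the
   prime 2 imposes nothing, since all odd numbers agree modulo 2. *)

Definition squarefree (n : nat) : Prop := forall p, prime p -> ~~ (p * p %| n).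

Lemma squarefree_gt0 n : squarefree n -> 0 < n.
Proof. by case: n => // /(_ 2 isT); rewrite dvdn0. Qed.

Lemma squarefree1 : squarefree 1.
Proof. by move=> p pp; rewrite dvdn1 muln_eq1 andbb; apply: contraTneq pp => ->. Qed.

Lemma squarefree_prime p : prime p -> squarefree p.
Proof.
move=> pp q qp; apply/negP => qqp.
have /eqP qp_eq : q == p by rewrite -dvdn_prime2 //; apply: dvdn_trans qqp; apply: dvdn_mulr.
move: qqp; rewrite qp_eq => /dvdn_leq; have := prime_gt1 pp; nia.
Qed.

Lemma squarefree_dvd m n : m %| n -> squarefree n -> squarefree m.
Proof. by move=> mn sn p pp; apply: contra (sn p pp) => /dvdn_trans; apply. Qed.

Lemma squarefreeM m n : coprime m n -> squarefree m -> squarefree n -> squarefree (m * n).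
Proof.
move=> cmn sm sn p pp; have [pm | pm] := boolP (p %| m).
- have cpn : coprime (p * p) n by rewrite coprimeMl andbb (coprime_dvdl pm cmn).
  by rewrite Gauss_dvdl // sm.
- have cpm : coprime (p * p) m by rewrite coprimeMl andbb prime_coprime.
  by rewrite Gauss_dvdr // sn.
Qed.

Lemma squarefree_coprime m n : squarefree (m * n) -> coprime m n.
Proof.
move=> smn; apply: contraT => ncop.
have g1 : 1 < gcdn m n.
  have := squarefree_gt0 smn; rewrite muln_gt0 => /andP[m0 _].
  by move: ncop; rewrite /coprime; have := gcdn_gt0 m n; rewrite m0; lia.
have /andP[pm pn] : (pdiv (gcdn m n) %| m) && (pdiv (gcdn m n) %| n).
  by rewrite -dvdn_gcd pdiv_dvd.
by have := smn _ (pdiv_prime g1); rewrite dvdn_mul.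
Qed.

Lemma squarefree_prod_primes s : uniq s -> all prime s -> squarefree (\prod_(p <- s) p).
Proof.
elim: s => [|p s IH] /=; first by rewrite big_nil => _ _; apply: squarefree1.
move=> /andP[ps us] /andP[pp s_prime]; rewrite big_cons.
apply: squarefreeM; [|exact: squarefree_prime | exact: IH].
rewrite prime_coprime // Euclid_dvd_prod // big_has; apply/hasPn => q qs.
by rewrite dvdn_prime2 ?(allP s_prime q qs) //; apply: contraNneq ps => ->.
Qed.

Lemma eq_modn_dvdm d m a b : d %| m -> a = b %[mod m] -> a = b %[mod d].
Proof. by move=> dm e; rewrite -(modn_dvdm a dm) e modn_dvdm. Qed.

Lemma squarefree_eq_mod g x y : squarefree g ->
  (forall p, prime p -> p %| g -> x = y %[mod p]) -> x = y %[mod g].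
Proof.
move=> sg; wlog yx : x y / y <= x => [W H|H].
  have [yx | /ltnW xy] := leqP y x; first exact: W.
  by symmetry; apply: W => // p pp pg; rewrite H.
apply/eqP; rewrite eqn_mod_dvd //; apply/dvdn_partP => [|p]; first exact: squarefree_gt0.
rewrite mem_primes => /and3P[pp g0 pg].
have logn1 : logn p g = 1.
  have := sg p pp; rewrite -[p * p]/(p ^ 2) pfactor_dvdn // -ltnNge ltnS => le1.
  have : 0 < logn p g by rewrite logn_gt0 mem_primes pp g0 pg.
  lia.
by rewrite p_part logn1 -eqn_mod_dvd // (H p pp pg).
Qed.

Lemma chinese_squarefree b d x y : squarefree b ->
  (forall p, prime p -> p %| b -> p %| d -> x = y %[mod p]) ->
  exists w, w = x %[mod b] /\ w = y %[mod d].
Proof.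
move=> sb H; set g := gcdn b d; set b' := b %/ g.
have eb : b = b' * g by rewrite divnK // dvdn_gcdl.
have cb'g : coprime b' g by apply: squarefree_coprime; rewrite -eb.
have cb'd : coprime b' d.
  rewrite /coprime -dvdn1 -(eqP cb'g) dvdn_gcd dvdn_gcdl dvdn_gcd dvdn_gcdr andbT.
  by apply: dvdn_trans (dvdn_gcdl _ _) _; rewrite eb dvdn_mulr.
have gxy : x = y %[mod g].
  apply: squarefree_eq_mod => [|p pp pg]; first exact: squarefree_dvd (dvdn_gcdl b d) sb.
  by apply: H; rewrite // (dvdn_trans pg) ?dvdn_gcdl ?dvdn_gcdr.
exists (chinese b' d x y); split; last exact: chinese_modr.
rewrite eb; apply/eqP; rewrite chinese_remainder // (chinese_modl cb'd) eqxx /=.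
by rewrite (eq_modn_dvdm (dvdn_gcdr b d) (chinese_modr cb'd x y)) gxy.
Qed.

Lemma progrP a b w : progr a b w <-> a <= w /\ w = a %[mod b].
Proof.
split => [[n ->] | [aw]]; first by rewrite leq_addr mulnC addnC modnMDl.
move/eqP; rewrite eqn_mod_dvd // => /dvdnP[k wa]; exists k.
by rewrite mulnC -wa subnKC.
Qed.

Lemma progr_refl a b : progr a b a.
Proof. by exists 0; rewrite muln0 addn0. Qed.

Lemma progr_mod_dvd a b q x : progr a b x -> q %| b -> x = a %[mod q].
Proof. by move=> /progrP[_ xa] qb; apply: eq_modn_dvdm qb xa. Qed.

Lemma progr_coprime a b x : coprime a b -> progr a b x -> coprime x b.
Proof. by move=> cab [n ->]; rewrite /coprime gcdnC addnC mulnC gcdnMDl gcdnC. Qed.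

Lemma progr_ndvd a b q x : coprime a b -> progr a b x -> prime q -> q %| b -> ~~ (q %| x).
Proof.
move=> cab ax qp qb; rewrite -prime_coprime // coprime_sym.
exact: coprime_dvdr qb (progr_coprime cab ax).
Qed.

Lemma kopen_progr a b : basic a b -> kopen (progr a b).
Proof.
move=> [a0 b0 cab sb] x ax; exists x, b; split; last split.
- by split=> //; [apply: leq_trans a0 _; case/progrP: ax | apply: progr_coprime ax].
- exact: progr_refl.
- move=> w /progrP[xw wx]; case/progrP: ax => ax xa.
  by apply/progrP; split; [apply: leq_trans ax xw | rewrite wx].
Qed.

Lemma progr_meet a b c d : squarefree b -> 0 < d ->
  (forall p, prime p -> p %| b -> p %| d -> a = c %[mod p]) ->
  exists w, progr a b w /\ progr c d w.
Proof.
move=> sb d0 H; have [w0 [wa wc]] := chinese_squarefree sb H.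
have bd0 : 0 < b * d by rewrite muln_gt0 squarefree_gt0.
exists (b * d * (a + c) + w0); split; apply/progrP; split.
- by have := leq_pmull (a + c) bd0; lia.
- by rewrite -mulnA mulnC modnMDl.
- by have := leq_pmull (a + c) bd0; lia.
- by rewrite [b * d]mulnC -mulnA mulnC modnMDl.
Qed.

Lemma kclosure_mono (U U' : nat -> Prop) y :
  (forall w, U w -> U' w) -> kclosure U y -> kclosure U' y.
Proof.
move=> UU' [y0 cl]; split => // V oV Vy.
by have [w [Vw Uw]] := cl V oV Vy; exists w; split; last exact: UU'.
Qed.

Lemma kclosure_progr_mod a b q y : kclosure (progr a b) y ->
  prime q -> q %| b -> ~~ (q %| y) -> y = a %[mod q].
Proof.
move=> [y0 cl] qp qb qy.
have byq : basic y q.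
  split=> //; [exact: prime_gt0 | by rewrite coprime_sym prime_coprime | exact: squarefree_prime].
have [w [/progrP[_ wy] wa]] := cl _ (kopen_progr byq) (progr_refl y q).
by rewrite -wy (progr_mod_dvd wa qb).
Qed.

Lemma kclosure_progr a b y : basic a b -> 0 < y ->
  (forall q, prime q -> q %| b -> ~~ (q %| y) -> y = a %[mod q]) ->
  kclosure (progr a b) y.
Proof.
move=> [_ _ _ sb] y0 H; split=> // V oV Vy.
have [c [d [[_ d0 ccd _] [yc cdV]]]] := oV y Vy.
have [w [wa wc]] : exists w, progr a b w /\ progr c d w.
  apply: progr_meet => // p pp pb pd.
  by rewrite -(H p pp pb (progr_ndvd ccd yc pp pd)) (progr_mod_dvd yc pd).
by exists w; split; [apply: cdV | ].
Qed.

Lemma fin_choice (T : eqType) (U : Type) (u0 : U) (P : T -> U -> Prop) (s : seq T) :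
  (forall x, x \in s -> exists u, P x u) -> exists f : T -> U, forall x, x \in s -> P x (f x).
Proof.
elim: s => [|x s IH] H; first by exists (fun=> u0).
have [u Pxu] := H x (mem_head x s).
have [f Pf] : exists f : T -> U, forall y, y \in s -> P y (f y).
  by apply: IH => y ys; apply: H; rewrite inE ys orbT.
exists (fun y => if y == x then u else f y) => y; rewrite inE.
by case: eqP => [-> | _ /Pf].
Qed.

Lemma inF_progrP S B : inF S B <-> exists a b : nat -> nat,
  (forall x, x \in S -> basic (a x) (b x) /\ progr (a x) (b x) x) /\
  (forall y, (forall x, x \in S -> kclosure (progr (a x) (b x)) y) -> B y).
Proof.
split => [[U [HU HB]] | [a [b [Hab HB]]]]; last first.
  exists (fun x => progr (a x) (b x)); split=> // x xS.
  by have [bx ax] := Hab x xS; split; first exact: kopen_progr.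
pose nbhd x (u : nat * nat) :=
  [/\ basic u.1 u.2, progr u.1 u.2 x & forall w, progr u.1 u.2 w -> U x w].
have [f Hf] : exists f, forall x, x \in S -> nbhd x (f x).
  apply: (fin_choice (0, 0)) => x xS; have [oU Ux] := HU x xS.
  by have [a [b [? [? ?]]]] := oU x Ux; exists (a, b).
exists (fun x => (f x).1), (fun x => (f x).2); split => [x xS | y Hy].
  by have [] := Hf x xS.
by apply: HB => x xS; have [_ _ /kclosure_mono] := Hf x xS; apply; apply: Hy.
Qed.

Lemma dvdn_prod_seq (s : seq nat) (f : nat -> nat) x : x \in s -> f x %| \prod_(y <- s) f y.
Proof. by move=> xs; rewrite (big_rem x) // dvdn_mulr. Qed.

Lemma prod_seq_gt0 (s : seq nat) (f : nat -> nat) :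
  (forall x, x \in s -> 0 < f x) -> 0 < \prod_(y <- s) f y.
Proof. by move=> f0; rewrite big_seq; apply: prodn_cond_gt0. Qed.

Definition compatible_mod (S : seq nat) (p r : nat) : Prop :=
  ~~ (p %| r) -> forall z, z \in S -> ~~ (p %| z) -> r = z %[mod p].

Definition compatible_incl (E F : seq nat) : Prop :=
  forall p r, prime p -> compatible_mod F p r -> compatible_mod E p r.

Lemma compatible_mod_eq S p r r' :
  r = r' %[mod p] -> compatible_mod S p r -> compatible_mod S p r'.
Proof. by move=> e; rewrite /compatible_mod /dvdn -e. Qed.

Lemma inF_compatible_mod E x0 p : all (fun x => 0 < x) E -> x0 \in E -> prime p ->
  inF E (fun y => 0 < y /\ compatible_mod E p y).
Proof.
move=> /allP Epos x0E pp; apply/inF_progrP.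
exists id, (fun x => if p %| x then 1 else p); split => [x xE | y Hy].
  split; last exact: progr_refl.
  case: ifP => px; split; rewrite ?(Epos x xE) ?(prime_gt0 pp) ?coprimen1 //.
  - exact: squarefree1.
  - by rewrite coprime_sym prime_coprime // px.
  - exact: squarefree_prime.
split; first by case: (Hy x0 x0E).
move=> py x xE px; have := Hy x xE; rewrite /= (negbTE px) => cl.
exact: kclosure_progr_mod cl pp (dvdnn p) py.
Qed.

Lemma compatible_incl_of_inF E F x0 : all (fun x => 0 < x) E -> x0 \in E ->
  (forall B : nat -> Prop, (forall n, B n -> 0 < n) -> inF E B -> inF F B) ->
  compatible_incl E F.
Proof.
move=> Epos x0E incl p r pp Fr.
have /inF_progrP[a [b [Hab HB]]] : inF F (fun y => 0 < y /\ compatible_mod E p y).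
  by apply: incl (inF_compatible_mod Epos x0E pp) => n [].
set N := \prod_(z <- F) b z.
have N0 : 0 < N by apply: prod_seq_gt0 => z /Hab[[_ ? _ _] _].
have [m cpm eN] := pfactor_coprime pp N0.
have m0 : 0 < m by move: N0; rewrite eN muln_gt0 => /andP[].
have cmp : coprime m p by rewrite coprime_sym.
(* y is r modulo p and divisible by every other prime factor of N. *)
pose y := m * p + chinese m p 0 r.
have ym : y = 0 %[mod m] by rewrite /y mulnC modnMDl chinese_modl.
have yr : y = r %[mod p] by rewrite /y modnMDl chinese_modr.
have y0 : 0 < y by rewrite /y addn_gt0 muln_gt0 m0 prime_gt0.
suff [_ Ey] : 0 < y /\ compatible_mod E p y by apply: compatible_mod_eq Ey.
apply: HB => z zF; have [bz az] := Hab z zF.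
apply: kclosure_progr => // q qp qbz qy.
have [qp_eq | qp_neq] := eqVneq q p.
  rewrite qp_eq in qbz qy *.
  have pr : ~~ (p %| r) by rewrite /dvdn -yr.
  rewrite yr (Fr pr z zF (progr_ndvd _ az pp qbz)); last by case: bz.
  exact: progr_mod_dvd az qbz.
have qm : q %| m.
  have cq : coprime q (p ^ logn p N) by rewrite coprimeXr // prime_coprime // dvdn_prime2.
  by rewrite -(Gauss_dvdl _ cq) -eN (dvdn_trans qbz) // dvdn_prod_seq.
by move: qy; rewrite /dvdn (eq_modn_dvdm qm ym) mod0n.
Qed.

Definition coprime_rad (N z : nat) : nat := \prod_(q <- primes N | ~~ (q %| z)) q.

Lemma basic_coprime_rad N z : 0 < z -> basic z (coprime_rad N z).
Proof.
have sq : squarefree (coprime_rad N z).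
  rewrite /coprime_rad -big_filter; apply: squarefree_prod_primes.
    exact/filter_uniq/primes_uniq.
  by apply/allP => q; rewrite mem_filter mem_primes => /andP[_ /and3P[]].
move=> z0; split=> //; first exact: squarefree_gt0.
rewrite /coprime_rad big_seq_cond; elim/big_ind: _ => [|c c' zc zc'|q].
- exact: coprimen1.
- by rewrite coprimeMr zc zc'.
- by rewrite mem_primes => /andP[/andP[qp _] qz]; rewrite coprime_sym prime_coprime.
Qed.

Lemma dvdn_coprime_rad N z q : 0 < N -> prime q -> q %| N -> ~~ (q %| z) ->
  q %| coprime_rad N z.
Proof.
move=> N0 qp qN qz; rewrite /coprime_rad (big_rem q) ?qz ?dvdn_mulr //.
by rewrite mem_primes qp N0 qN.
Qed.

Lemma inF_of_compatible_incl E F z0 : all (fun z => 0 < z) F -> z0 \in F ->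
  compatible_incl E F -> forall B, inF E B -> inF F B.
Proof.
move=> /allP Fpos z0F incl B /inF_progrP[a [b [Hab HB]]].
set N := \prod_(x <- E) b x.
have N0 : 0 < N by apply: prod_seq_gt0 => x /Hab[[_ ? _ _] _].
apply/inF_progrP; exists id, (coprime_rad N); split => [z zF | y Hy].
  by split; [apply: basic_coprime_rad; apply: Fpos | apply: progr_refl].
have y0 : 0 < y by case: (Hy z0 z0F).
apply: HB => x xE; have [bx ax] := Hab x xE.
apply: kclosure_progr => // q qp qbx qy.
have qN : q %| N by rewrite (dvdn_trans qbx) // dvdn_prod_seq.
have Fy : compatible_mod F q y.
  move=> _ z zF qz.
  exact: kclosure_progr_mod (Hy z zF) qp (dvdn_coprime_rad N0 qp qN qz) qy.
have qx : ~~ (q %| x) by case: bx => _ _ cab _; apply: progr_ndvd cab ax qp qbx.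
by rewrite (incl q y qp Fy qy x xE qx) (progr_mod_dvd ax qbx).
Qed.

Lemma eq_mod0_dvdn p z : z = 0 %[mod p] <-> p %| z.
Proof. by rewrite mod0n; split => /eqP. Qed.

Lemma compatible_mod2 S r : compatible_mod S 2 r.
Proof. by move=> r_odd z _ z_odd; move: r_odd z_odd; rewrite !dvdn2 !negbK !modn2 => -> ->. Qed.

Lemma inPi_compatible_mod S p r : inPi S p -> compatible_mod S p r.
Proof. by move=> [_ pS] _ z /pS pz; rewrite pz. Qed.

Lemma notin_PiP S p : prime p -> ~ inPi S p -> exists2 z, z \in S & ~~ (p %| z).
Proof.
move=> pp nPi; apply/hasP; apply: contra_notT nPi => /hasPn pS.
by split=> // z /pS /negPn.
Qed.

Lemma inA_compatible_mod S p :
  inA S p <-> prime p /\ exists2 r, ~~ (p %| r) & compatible_mod S p r.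
Proof.
split => [[pp [k [k0 Sk]]] | [pp [r pr Sr]]]; split => //.
  have Sk' z : z \in S -> ~~ (p %| z) -> z = k %[mod p].
    by move=> zS pz; case: (Sk z zS) => // /eq_mod0_dvdn pz'; rewrite pz' in pz.
  have [pk | pk] := boolP (p %| k); [exists 1 | exists k] => //.
  - by rewrite dvdn1; apply: contraTneq pp => ->.
  - move=> _ z zS pz; have zk := Sk' z zS pz.
    by move: pz; rewrite /dvdn zk -/(dvdn p k) pk.
  - by move=> _ z zS pz; rewrite (Sk' z zS pz).
exists r; split; first by rewrite lt0n; apply: contraNneq pr => ->.
move=> z zS; have [pz | pz] := boolP (p %| z); first by left; apply/eq_mod0_dvdn.
by right; rewrite (Sr pr z zS pz).
Qed.

Lemma is_alpha_mod S alpha p z : is_alpha S alpha -> inA S p ->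
  z \in S -> ~~ (p %| z) -> z = alpha p %[mod p].
Proof.
move=> Salpha pA zS pz; have [_ Sp _ _] := Salpha p pA.
by case: (Sp z zS) => // /eq_mod0_dvdn pz'; rewrite pz' in pz.
Qed.

Section CompatibleIncl.

Variables (E F : seq nat) (alphaE alphaF : nat -> nat).
Hypotheses (EalphaE : is_alpha E alphaE) (FalphaF : is_alpha F alphaF).

Lemma compatible_incl_inA : compatible_incl E F -> forall p, inA F p -> inA E p.
Proof.
move=> incl p /inA_compatible_mod[pp [r pr Fr]].
by apply/inA_compatible_mod; split => //; exists r => //; apply: incl.
Qed.

Lemma compatible_incl_inPi : compatible_incl E F ->
  forall p, inPi F p -> p <> 2 -> inPi E p.
Proof.
move=> incl p PiF p2; have pp : prime p by case: PiF.
split => // x xE; apply: contraT => px.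
have p_ndvd k : 0 < k < p -> ~~ (p %| k).
  by move=> /andP[k0 kp]; apply/negP => /(dvdn_leq k0); lia.
have p_gt2 : 2 < p by have := prime_gt1 pp; lia.
have x1 := incl p 1 pp (inPi_compatible_mod PiF) (p_ndvd 1 (ltnW p_gt2)) x xE px.
have x2 := incl p 2 pp (inPi_compatible_mod PiF) (p_ndvd 2 p_gt2) x xE px.
by move: x1; rewrite -x2 !modn_small // ltnW.
Qed.

Lemma compatible_incl_alpha : compatible_incl E F ->
  forall p, inA F p -> ~ inPi E p -> alphaE p = alphaF p.
Proof.
move=> incl p pA nPiE; have pp : prime p by case: pA.
have pAE := compatible_incl_inA incl pA.
have [ltE _ twoE _] := EalphaE pAE; have [ltF _ twoF _] := FalphaF pA.
have [p2 | /eqP p2] := eqVneq p 2; first by rewrite twoE // twoF.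
have [x xE px] := notin_PiP pp nPiE.
have [z zF pz] : exists2 z, z \in F & ~~ (p %| z).
  by apply: notin_PiP => // PiF; apply/nPiE/(compatible_incl_inPi incl PiF).
have pa : ~~ (p %| alphaF p) by rewrite /dvdn -(is_alpha_mod FalphaF pA zF pz).
have Fa : compatible_mod F p (alphaF p).
  by move=> _ w wF pw; rewrite (is_alpha_mod FalphaF pA wF pw).
move: (incl p _ pp Fa pa x xE px).
by rewrite (is_alpha_mod EalphaE pAE xE px) !modn_small // => ->.
Qed.

Lemma compatible_incl_of_conds :
  (forall p, inA F p -> inA E p) -> (forall p, inPi F p -> p <> 2 -> inPi E p) ->
  (forall p, inA F p -> ~ inPi E p -> alphaE p = alphaF p) -> compatible_incl E F.
Proof.
move=> AFE PiFE alphaEF p r pp Fr pr x xE px.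
have [p2 | /eqP p2] := eqVneq p 2.
  by rewrite p2 in pr px *; apply: compatible_mod2 pr x xE px.
have [z zF pz] : exists2 z, z \in F & ~~ (p %| z).
  by apply: notin_PiP => // /PiFE /(_ p2) [_ pE]; rewrite pE in px.
have pA : inA F p by apply/inA_compatible_mod; split => //; exists r.
have nPiE : ~ inPi E p by move=> [_ pE]; rewrite pE in px.
rewrite (Fr pr z zF pz) (is_alpha_mod FalphaF pA zF pz).
by rewrite (is_alpha_mod EalphaE (AFE p pA) xE px) alphaEF.
Qed.

Lemma compatible_inclP : compatible_incl E F <->
  [/\ forall p, inA F p -> inA E p, forall p, inPi F p -> p <> 2 -> inPi E p &
      forall p, inA F p -> ~ inPi E p -> alphaE p = alphaF p].
Proof.
split=> [incl | [AFE PiFE alphaEF]]; last exact: compatible_incl_of_conds.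
split; [exact: compatible_incl_inA | exact: compatible_incl_inPi | exact: compatible_incl_alpha].
Qed.

End CompatibleIncl.

Theorem lemma3p5 (E F : seq nat) (alphaE alphaF : nat -> nat) :
  uniq E -> all (fun x => 0 < x) E -> 2 <= size E ->
  uniq F -> all (fun x => 0 < x) F -> 2 <= size F ->
  is_alpha E alphaE -> is_alpha F alphaF ->
  ((forall B : nat -> Prop, (forall n, B n -> 0 < n) -> inF E B -> inF F B) <->
   [/\ (forall p, inA F p -> inA E p),
       (forall p, inPi F p -> p <> 2 -> inPi E p) &
       (forall p, inA F p -> ~ inPi E p -> alphaE p = alphaF p)]).
Proof.
move=> _ Epos sE _ Fpos sF EalphaE FalphaF.
have headE : head 0 E \in E by case: E sE {Epos EalphaE} => // x s _; rewrite mem_head.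
have headF : head 0 F \in F by case: F sF {Fpos FalphaF} => // z s _; rewrite mem_head.
rewrite -(compatible_inclP EalphaE FalphaF); split => [incl | incl B _].
  exact: compatible_incl_of_inF Epos headE incl.
exact: inF_of_compatible_incl Fpos headF incl B.
Qed.
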